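(* Let $c>0$ be constant. There exist constants $b_1,b_2,b_3>0$ depending only on $c$ such that for all sufficiently large $n$, at every time $t$ with $Z^t\ge1$, conditional on $(x^t,\lambda^t)$: $\Pr[\bar A]\le e^{-b_1\lambda^t}$ and $e^{-b_2\lambda^t Z^t/n}\le\Pr[\bar B]\le e^{-b_3\lambda^t Z^t/n}$. Moreover $\Pr[f^t(x^{t+1})\le f^t(x^t)]\le \exp\!\big(-\tfrac12 c e^{-c}\lfloor\lambda^t\rceil Z^t/n\big)$.
   Context: Consider the SA-$(1,\lambda)$-EA on a dynamic monotone function: a function $f:\{0,1\}^n\to\mathbb R$ is monotone if $f(x)>f(y)$ whenever $x\ne y$ and $x_i\ge y_i$ for all $i$; $(f^t)_{t\ge0}$ is a sequence of monotone functions, $f^t$ possibly chosen adversarially depending on $x^t$. The algorithm (with constants $c>0$, $s>0$, $F>1$) maintains $x^t\in\{0,1\}^n$, real $\lambda^t\ge1$; in generation $t$ it creates $\lfloor\lambda^t\rceil$ (nearest integer) offspring $y^{t,j}$, each independently by flipping every bit of $x^t$ independently with probability $c/n$; $x^{t+1}$ is an offspring maximizing $f^t$ (ties uniformly at random); $\lambda^{t+1}=\max\{1,\lambda^t/F\}$ if $f^t(x^{t+1})>f^t(x^t)$, else $\lambda^{t+1}=F^{1/s}\lambda^t$. $Z^t$ is the number of zero-bits of $x^t$. $A$ is the event that some offspring $y^{t,j}$ flips no one-bit of $x^t$ (i.e. $\{i:x^t_i=1\}\subseteq\{i:y^{t,j}_i=1\}$); $B$ is the event that some offspring flips at least one zero-bit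 of $x^t$ (there are $j,i$ with $x^t_i=0$, $y^{t,j}_i=1$). *)

From mathcomp Require Import all_boot all_order all_algebra.
From mathcomp Require Import reals.
From mathcomp Require Import sequences exp.
Set Implicit Arguments. Unset Strict Implicit. Unset Printing Implicit Defensive.
Import Order.TTheory GRing.Theory Num.Theory.
Local Open Scope ring_scope.

Notation bits n := {ffun 'I_n -> bool}.

(* Nearest integer of a nonnegative real (ties rounded up): floor(lam + 1/2). *)
Definition round_nat (R : realType) (lam : R) : nat := Num.truncn (lam + 2^-1).

Definition zeros n (x : bits n) : nat := #|[pred i | ~~ x i]|.

Definition monotone_fun (R : realType) n (f : bits n -> R) : Prop :=
  forall x y : bits n, x != y -> (forall i, y i ==> x i) -> f y < f x.

(* The random choices of one generation: k flip masks, one per offspring;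
   m j i = true iff offspring j flips bit i. *)
Notation masks k n := {ffun 'I_k -> bits n}.

Definition offspring n k (x : bits n) (m : masks k n) (j : 'I_k) : bits n :=
  [ffun i => x i (+) m j i].

(* Probability (under standard bit mutation with rate p, all bits of all k
   offspring flipped independently) of the event E on flip masks. *)
Definition mutPr (R : realType) n k (p : R) (E : pred (masks k n)) : R :=
  \sum_(m : masks k n | E m) \prod_(j < k) \prod_(i < n) (if m j i then p else 1 - p).

Definition evA n k (x : bits n) : pred (masks k n) :=
  fun m => [exists j, forall i, x i ==> offspring x m j i].

Definition evB n k (x : bits n) : pred (masks k n) :=
  fun m => [exists j, exists i, ~~ x i && offspring x m j i].

(* The k offspring are independent, so each of the three events is the k-th
   power of a one-offspring event whose probability is an explicit power of
   q = 1 - c/n: not A has probability (1 - q^(n-Z))^k and not B has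
   probability q^(Z k).  Since q^n >= e^-c/2 for large n and
   e^(-2c/n) <= q <= e^(-c/n), the bounds on A and B follow.  For the last
   bound, an offspring that flips some bit but no one-bit is strictly better
   than x for every monotone f, so a generation without improvement has none
   of those; one offspring is of that kind with probability
   q^(n-Z) - q^n >= Z (c/n) q^n >= Z c e^-c / (2n). *)
From mathcomp Require Import all_boot all_order all_algebra.
From mathcomp Require Import reals sequences exp.
From mathcomp Require Import ring lra.
Set Implicit Arguments. Unset Strict Implicit. Unset Printing Implicit Defensive.
Import Order.TTheory GRing.Theory Num.Theory.
Local Open Scope ring_scope.

Lemma sum_ffun_forall (R : comPzRingType) (I J : finType) (P : I -> pred J)
    (F : I -> J -> R) :
  \sum_(f : {ffun I -> J} | [forall i, P i (f i)]) \prod_i F i (f i)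
  = \prod_i \sum_(j | P i j) F i j.
Proof.
transitivity (\prod_i \sum_j (if P i j then F i j else 0)); last first.
  by apply: eq_bigr => i _; rewrite [in RHS]big_mkcond.
rewrite bigA_distr_bigA big_mkcond /=; apply: eq_bigr => f _.
case: (boolP [forall i, P i (f i)]) => [/forallP Pf | /forallPn [i Pfi]].
  by apply: eq_bigr => i _; rewrite Pf.
by rewrite (bigD1 i) //= (negbTE Pfi) mul0r.
Qed.

Definition ones n (x : bits n) : nat := #|[pred i | x i]|.

Lemma ones_add_zeros n (x : bits n) : (ones x + zeros x)%N = n.
Proof.
rewrite /ones /zeros -[RHS](card_ord n) -(cardC [pred i | x i]).
by congr (_ + _)%N; apply: eq_card.
Qed.

Lemma round_nat_bounds (R : realType) (lam : R) :
  1 <= lam -> lam / 2 <= (round_nat lam)%:R <= 2 * lam.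
Proof.
move=> lam_ge1; have hi : (round_nat lam)%:R <= lam + 2^-1.
  by rewrite truncn_le; lra.
have lo : lam + 2^-1 < (round_nat lam)%:R + 1 by rewrite natr1 truncnS_gt.
apply/andP; split; lra.
Qed.

Section BitMutation.
Variable R : realType.
Implicit Types (p : R) (n k : nat).

Definition flip_weight p (b : bool) : R := if b then p else 1 - p.

Definition bitPr n p (P : pred (bits n)) : R :=
  \sum_(b : bits n | P b) \prod_(i < n) flip_weight p (b i).

Lemma flip_weight_ge0 p b : 0 <= p <= 1 -> 0 <= flip_weight p b.
Proof. by case/andP=> p_ge0 p_le1; case: b => //=; rewrite subr_ge0. Qed.

Lemma mutPr_forall n k p (P : pred (bits n)) (E : pred (masks k n)) :
  (forall m, E m = [forall j, P (m j)]) -> mutPr p E = bitPr p P ^+ k.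
Proof.
move=> defE; rewrite /mutPr (eq_bigl _ _ defE) /=.
rewrite (sum_ffun_forall (fun _ => P) (fun _ b => \prod_(i < n) flip_weight p (b i))).
by rewrite prodr_const card_ord.
Qed.

Lemma mutPr_le n k p (E1 E2 : pred (masks k n)) : 0 <= p <= 1 ->
  (forall m, E1 m -> E2 m) -> mutPr p E1 <= mutPr p E2.
Proof.
move=> p01 sE12; rewrite /mutPr [X in X <= _]big_mkcond [X in _ <= X]big_mkcond.
apply: ler_sum => m _; case: (boolP (E1 m)) => [/sE12 -> //|_].
case: (E2 m) => //; apply: prodr_ge0 => j _; apply: prodr_ge0 => i _.
exact: flip_weight_ge0.
Qed.

Lemma bitPr_noflip n p (S : pred 'I_n) :
  bitPr p (fun b => [forall i, S i ==> ~~ b i]) = (1 - p) ^+ #|[pred i | S i]|.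
Proof.
rewrite /bitPr (sum_ffun_forall (fun i t => S i ==> ~~ t) (fun _ t => flip_weight p t)).
rewrite -[RHS]prodr_const [RHS]big_mkcond /=.
apply: eq_bigr => i _; rewrite big_mkcond big_bool /= inE /flip_weight.
by case: (S i) => /=; rewrite ?addr0 ?add0r // addrC subrK.
Qed.

Lemma bitPrT n p : bitPr p (fun _ : bits n => true) = 1.
Proof.
have := bitPr_noflip p (fun _ : 'I_n => false).
rewrite (_ : #|_| = 0%N) ?expr0; last exact: eq_card0.
by move=> <-; apply: eq_bigl => b; symmetry; apply/forallP.
Qed.

Lemma bitPrC n p (P : pred (bits n)) :
  bitPr p (fun b => ~~ P b) = 1 - bitPr p P.
Proof. by rewrite -(bitPrT n p) /bitPr (bigID P predT) /= addrC addrK. Qed.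

Lemma bitPrD n p (P Q : pred (bits n)) : (forall b, Q b -> P b) ->
  bitPr p (fun b => P b && ~~ Q b) = bitPr p P - bitPr p Q.
Proof.
move=> sQP; rewrite /bitPr [X in _ = X - _](bigID Q) /=.
rewrite [X in _ = X + _ - _](eq_bigl Q); first by rewrite addrC addKr.
by move=> b; apply/andP/idP => [[]//|Qb]; split => //; apply: sQP.
Qed.

Lemma mutPr_notA n k p (x : bits n) :
  mutPr p (fun m : masks k n => ~~ evA x m) = (1 - (1 - p) ^+ ones x) ^+ k.
Proof.
rewrite (@mutPr_forall n k p (fun b => ~~ [forall i, x i ==> ~~ b i])).
  by rewrite bitPrC bitPr_noflip.
move=> m; rewrite /evA negb_exists; apply: eq_forallb => j; congr (~~ _).
by apply: eq_forallb => i; rewrite /offspring ffunE; case: (x i).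
Qed.

Lemma mutPr_notB n k p (x : bits n) :
  mutPr p (fun m : masks k n => ~~ evB x m) = (1 - p) ^+ (zeros x * k).
Proof.
rewrite exprM (@mutPr_forall n k p (fun b => [forall i, ~~ x i ==> ~~ b i])).
  by rewrite bitPr_noflip.
move=> m; rewrite /evB negb_exists; apply: eq_forallb => j.
rewrite negb_exists; apply: eq_forallb => i.
by rewrite /offspring ffunE; case: (x i).
Qed.

Definition improving_flip n (x : bits n) (b : bits n) : bool :=
  [forall i, x i ==> ~~ b i] && ~~ [forall i, true ==> ~~ b i].

Lemma bitPr_improving_flip n p (x : bits n) :
  bitPr p (improving_flip x) = (1 - p) ^+ ones x - (1 - p) ^+ n.
Proof.
rewrite bitPrD ?bitPr_noflip; last first.
  by move=> b /forallP noflip; apply/forallP => i; apply/implyP => _; apply: (implyP (noflip i)).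
by congr (_ - _ ^+ _); rewrite -[RHS](card_ord n); apply: eq_card.
Qed.

Lemma improving_flip_gt n (x : bits n) (f : bits n -> R) k (m : masks k n) j :
  monotone_fun f -> improving_flip x (m j) -> f x < f (offspring x m j).
Proof.
move=> f_mono /andP [/forallP keep_ones /forallPn [i0 flip_i0]].
have m_i0 : m j i0 by move: flip_i0; case: (m j i0).
apply: f_mono.
  apply/eqP => /(congr1 (fun g : bits n => g i0)).
  by rewrite /offspring ffunE m_i0; case: (x i0).
move=> i; rewrite /offspring ffunE; apply/implyP => x_i.
by move: (implyP (keep_ones i) x_i); rewrite x_i; case: (m j i).
Qed.

Lemma mutPr_no_improvement n k p (x : bits n) (f : bits n -> R)
    (sel : masks k n -> 'I_k) : 0 <= p <= 1 -> monotone_fun f ->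
  (forall m j, f (offspring x m j) <= f (offspring x m (sel m))) ->
  mutPr p (fun m : masks k n => f (offspring x m (sel m)) <= f x)
    <= (1 - ((1 - p) ^+ ones x - (1 - p) ^+ n)) ^+ k.
Proof.
move=> p01 f_mono sel_max; rewrite -bitPr_improving_flip -bitPrC.
rewrite -(@mutPr_forall _ _ _ _ (fun m => [forall j, ~~ improving_flip x (m j)])) //.
apply: mutPr_le => // m no_impr; apply/forallP => j; apply/negP => /(improving_flip_gt f_mono).
by rewrite ltNge (le_trans (sel_max m j) no_impr).
Qed.

End BitMutation.

Section ExpBounds.
Variable R : realType.
Implicit Types (a p q : R).

Lemma expRN_div1B_le p : 0 <= p < 1 -> expR (- (p / (1 - p))) <= 1 - p.
Proof.
case/andP=> p_ge0 p_lt1; have q_gt0 : 0 < 1 - p by rewrite subr_gt0.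
rewrite expRN -[X in X <= _]mul1r ler_pdivrMr ?expR_gt0 //.
apply: le_trans (_ : (1 - p) * (1 + p / (1 - p)) <= _).
  by rewrite mulrDr mulr1 mulrCA divff ?mulr1 ?subrK // gt_eqF.
by rewrite ler_pM2l // expR_ge1Dx.
Qed.

Lemma expRN_le_exprn a q m : expR (- a) <= q -> expR (- (a * m%:R)) <= q ^+ m.
Proof.
move=> le_aq; rewrite -mulNr expRM_natr; apply: lerXn2r => //.
  by rewrite nnegrE ltW // expR_gt0.
by rewrite nnegrE (le_trans _ le_aq) // ltW // expR_gt0.
Qed.

Lemma exprn_le_expRN a q m : 0 <= q -> q <= expR (- a) ->
  q ^+ m <= expR (- (a * m%:R)).
Proof.
move=> q_ge0 le_qa; rewrite -mulNr expRM_natr; apply: lerXn2r => //.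
by rewrite nnegrE ltW // expR_gt0.
Qed.

Lemma expr1B_le_expRN a m : a <= 1 -> (1 - a) ^+ m <= expR (- (a * m%:R)).
Proof. by move=> a_le1; apply: exprn_le_expRN; rewrite ?subr_ge0 ?expR_ge1Dx. Qed.

Lemma exprn_gap q Z : 0 <= q <= 1 -> Z%:R * (1 - q) * q ^+ Z <= 1 - q ^+ Z.
Proof.
case/andP=> q_ge0 q_le1; elim: Z => [|Z IH]; first by rewrite !mul0r subrr.
have qZ_ge0 : 0 <= q ^+ Z by apply: exprn_ge0.
have qZ_le1 : q ^+ Z <= 1 by apply: exprn_ile1.
have : 0 <= (Z%:R + 1) * (1 - q) * q ^+ Z * (1 - q).
  by rewrite !mulr_ge0 ?subr_ge0 // addr_ge0.
rewrite exprS -natr1; nra.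
Qed.

End ExpBounds.


Section LargeDimension.
Variables (R : realType) (c : R) (n : nat).

Local Notation p := (c / n%:R).
Local Notation q := (1 - c / n%:R).

Lemma mutation_rate_small : 0 < c -> 4 * c ^+ 2 + 2 * c < n%:R ->
  [/\ 0 < n%:R :> R, p * n%:R = c, 0 < p, 2 * p < 1 & 4 * c * p < 1].
Proof.
move=> c_gt0 n_large; have c2_ge0 := sqr_ge0 c.
have n_gt0 : 0 < n%:R :> R by move: n_large; lra.
have p_mul_n : p * n%:R = c by rewrite mulfVK // gt_eqF.
split => //; first by rewrite divr_gt0.
- rewrite -(ltr_pM2r n_gt0) mul1r.
  have -> : 2 * p * n%:R = 2 * c by field; rewrite gt_eqF.
  by move: n_large; lra.
- rewrite -(ltr_pM2r n_gt0) mul1r.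
  have -> : 4 * c * p * n%:R = 4 * c ^+ 2 by field; rewrite gt_eqF.
  by move: n_large; lra.
Qed.

Lemma expRN_le_exprn_dim : 0 < c -> 4 * c ^+ 2 + 2 * c < n%:R ->
  expR (- c) / 2 <= q ^+ n.
Proof.
move=> c_gt0 /(mutation_rate_small c_gt0) [n_gt0 p_mul_n p_gt0 p_small cp_small].
set a := p / (1 - p).
have a_q : a * (1 - p) = p by rewrite /a mulfVK // gt_eqF // subr_gt0; lra.
have a_ge0 : 0 <= a by rewrite /a divr_ge0 //; lra.
have ac_small : a * c <= 2^-1 by nra.
apply: le_trans (expRN_le_exprn n (expRN_div1B_le _)); last by apply/andP; split; lra.
have -> : a * n%:R = c + a * c by nra.
have := expR_ge1Dx (- (a * c)); have := expR_gt0 (- c).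
rewrite opprD expRD; nra.
Qed.

Variables (x : bits n) (lam : R).
Hypotheses (c_gt0 : 0 < c) (n_large : 4 * c ^+ 2 + 2 * c < n%:R).
Hypothesis lam_ge1 : 1 <= lam.

Local Notation k := (round_nat lam).
Local Notation Z := (zeros x)%:R.

Lemma notA_bound :
  mutPr p (fun m : masks k n => ~~ evA x m) <= expR (- (expR (- c) / 4 * lam)).
Proof.
have [n_gt0 p_mul_n p_gt0 p_small cp_small] := mutation_rate_small c_gt0 n_large.
have /andP [k_lo _] := round_nat_bounds lam_ge1.
have q01 : 0 <= q <= 1 by apply/andP; split; lra.
have qn_le_qones : q ^+ n <= q ^+ ones x.
  by apply: ler_wiXn2l; [lra | lra | rewrite -[X in (_ <= X)%N](ones_add_zeros x) leq_addr].
have qones_le1 : q ^+ ones x <= 1 by case/andP: q01 => q_ge0 q_le1; exact: exprn_ile1.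
have qn_large := expRN_le_exprn_dim c_gt0 n_large.
have e_gt0 := expR_gt0 (- c).
rewrite mutPr_notA; apply: le_trans (_ : (1 - expR (- c) / 2) ^+ k <= _).
  by apply: lerXn2r; rewrite ?nnegrE; lra.
apply: le_trans (expr1B_le_expRN _ _) _; first lra.
rewrite ler_expR lerN2; have := lam_ge1; nra.
Qed.

Lemma notB_lower :
  expR (- (4 * c * lam * Z / n%:R)) <= mutPr p (fun m : masks k n => ~~ evB x m).
Proof.
have [n_gt0 p_mul_n p_gt0 p_small cp_small] := mutation_rate_small c_gt0 n_large.
have /andP [_ k_hi] := round_nat_bounds lam_ge1.
have Z_ge0 : 0 <= Z :> R by [].
have q_large : expR (- (2 * p)) <= q.
  apply: le_trans (expRN_div1B_le _); last by apply/andP; split; lra.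
  rewrite ler_expR lerN2 ler_pdivrMr; nra.
rewrite mutPr_notB; apply: le_trans (expRN_le_exprn _ q_large).
rewrite ler_expR lerN2 natrM.
have -> : 4 * c * lam * Z / n%:R = 4 * p * lam * Z by field; rewrite gt_eqF.
have : 0 <= (2 * p * Z) * (2 * lam - k%:R) by apply: mulr_ge0; nra.
have := lam_ge1; nra.
Qed.

Lemma notB_upper :
  mutPr p (fun m : masks k n => ~~ evB x m) <= expR (- (c / 2 * lam * Z / n%:R)).
Proof.
have [n_gt0 p_mul_n p_gt0 p_small cp_small] := mutation_rate_small c_gt0 n_large.
have /andP [k_lo _] := round_nat_bounds lam_ge1.
have Z_ge0 : 0 <= Z :> R by [].
rewrite mutPr_notB; apply: le_trans (exprn_le_expRN _ _ (expR_ge1Dx _)) _.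
  by rewrite subr_ge0; lra.
rewrite ler_expR lerN2 natrM.
have -> : c / 2 * lam * Z / n%:R = 2^-1 * p * lam * Z by field; rewrite gt_eqF.
have : 0 <= (p * Z) * (k%:R - 2^-1 * lam) by apply: mulr_ge0; nra.
have := lam_ge1; nra.
Qed.

Lemma no_improvement_bound (f : bits n -> R) (sel : masks k n -> 'I_k) :
  monotone_fun f ->
  (forall m j, f (offspring x m j) <= f (offspring x m (sel m))) ->
  mutPr p (fun m : masks k n => f (offspring x m (sel m)) <= f x)
    <= expR (- (2^-1 * c * expR (- c) * k%:R * Z / n%:R)).
Proof.
move=> f_mono sel_max.
have [n_gt0 p_mul_n p_gt0 p_small cp_small] := mutation_rate_small c_gt0 n_large.
have p01 : 0 <= p <= 1 by apply/andP; split; lra.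
have q01 : 0 <= q <= 1 by apply/andP; split; lra.
apply: le_trans (mutPr_no_improvement p01 f_mono sel_max) _.
have gap : Z * p * q ^+ n <= q ^+ ones x - q ^+ n.
  have -> : q ^+ n = q ^+ ones x * q ^+ zeros x by rewrite -exprD ones_add_zeros.
  have -> : q ^+ ones x - q ^+ ones x * q ^+ zeros x = q ^+ ones x * (1 - q ^+ zeros x).
    by ring.
  rewrite mulrCA; apply: ler_wpM2l; first by apply: exprn_ge0; case/andP: q01.
  by have := exprn_gap (zeros x) q01; rewrite opprB addrC subrK.
have qn_large := expRN_le_exprn_dim c_gt0 n_large.
have e_gt0 := expR_gt0 (- c).
apply: le_trans (expr1B_le_expRN _ _) _.
  by case/andP: q01 => q_ge0 q_le1; have := exprn_ge0 n q_ge0;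
     have := exprn_ile1 (ones x) q_ge0 q_le1; lra.
rewrite ler_expR lerN2.
have -> : 2^-1 * c * expR (- c) * k%:R * Z / n%:R
        = (Z * p * (expR (- c) / 2)) * k%:R by field; rewrite gt_eqF.
apply: ler_wpM2r => //; apply: le_trans gap.
by apply: ler_wpM2l => //; rewrite mulr_ge0 // ltW.
Qed.

End LargeDimension.

Theorem mainTheorem7 (R : realType) (c : R) (hc : 0 < c) :
  exists b1 b2 b3 : R, [/\ 0 < b1, 0 < b2 & 0 < b3] /\
  exists N : nat, forall n : nat, (N <= n)%N ->
  forall (x : bits n) (lam : R), (1 <= zeros x)%N -> 1 <= lam ->
    let k := round_nat lam in
    let p := c / n%:R in
    [/\ mutPr p (fun m : masks k n => ~~ evA x m) <= expR (- (b1 * lam)),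
        expR (- (b2 * lam * (zeros x)%:R / n%:R))
          <= mutPr p (fun m : masks k n => ~~ evB x m),
        mutPr p (fun m : masks k n => ~~ evB x m)
          <= expR (- (b3 * lam * (zeros x)%:R / n%:R))
      & forall (f : bits n -> R), monotone_fun f ->
        forall sel : masks k n -> 'I_k,
          (forall m j, f (offspring x m j) <= f (offspring x m (sel m))) ->
          mutPr p (fun m : masks k n => f (offspring x m (sel m)) <= f x)
            <= expR (- (2^-1 * c * expR (- c) * k%:R * (zeros x)%:R / n%:R))].
Proof.
exists (expR (- c) / 4), (4 * c), (c / 2).
split; first by have := expR_gt0 (- c); split; lra.
exists (Num.truncn (4 * c ^+ 2 + 2 * c)).+1 => n n_ge x lam _ lam_ge1 k p.
have n_large : 4 * c ^+ 2 + 2 * c < n%:R.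
  by apply: lt_le_trans (truncnS_gt _) _; rewrite ler_nat.
split.
- exact: notA_bound.
- exact: notB_lower.
- exact: notB_upper.
- by move=> f f_mono sel sel_max; apply: no_improvement_bound.
Qed.
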